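(* Let $t_1<t_2$, let $u:[t_1,t_2]\to\mathcal C$ be measurable and $p:[t_1,t_2]\to\mathbb R^3$ absolutely continuous with $\frac{dp}{dt}=p(t)\times u(t)$ and $\mathcal H(p(t),u(t))=\mathcal M(p(t))=0$ for almost all $t$. (a) If $p(t)=S-\kappa Q+z(t)Z$ for all $t\in[t_1,t_2]$, then $z(t)=0$ on $[t_1,t_2]$ and $u(t)=W_+/(1+\kappa c+\kappa+c)$ for almost all $t$. (b) If $\kappa>0$ and $p(t)=S+\kappa Q+z(t)Z$ for all $t\in[t_1,t_2]$, then $\kappa\ge c$, $z(t)=0$ on $[t_1,t_2]$ and $u(t)$ is the positive multiple of $W_-$ lying in $\mathcal C$ for almost all $t$. Analogously, if $p(t)=-S+\kappa Q+z(t)Z$ (resp. $p(t)=-S-\kappa Q+z(t)Z$ with $\kappa>0$) on $[t_1,t_2]$, then $z\equiv0$ and $u(t)$ is the multiple of $-W_+$ (resp. $-W_-$) lying in $\mathcal C$.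
   Context: Fix unit vectors $X,Y\in\mathbb R^3$ with angle $\alpha\in(0,\pi/2]$, $c=\cos\alpha$, and $\kappa\in[0,1]$. Let $Z=X\times Y$, $S=X-cY$, $Q=Y-cX$. Let $\mathcal C=\{aX+bY:|a|+|b|=1\}$, $\mathrm{cost}(aX+bY)=|a|+\kappa|b|$, $\mathcal H(p,u)=-\sin^2(\alpha)\mathrm{cost}(u)+(p,u)$, $\mathcal M(p)=\max_{u\in\mathcal C}\mathcal H(p,u)$. $W_+=(1+\kappa c)X-(\kappa+c)Y$ and $W_-=(1-\kappa c)X+(\kappa-c)Y$. *)

From Stdlib Require Import Reals Lra.
Open Scope R_scope.

Record V3 := mkV3 { vx : R; vy : R; vz : R }.

Definition vadd (u v : V3) := mkV3 (vx u + vx v) (vy u + vy v) (vz u + vz v).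
Definition vscale (a : R) (u : V3) := mkV3 (a * vx u) (a * vy u) (a * vz u).
Definition vopp (u : V3) := vscale (-1) u.
Definition vsub (u v : V3) := vadd u (vopp v).
Definition dot (u v : V3) := vx u * vx v + vy u * vy v + vz u * vz v.
Definition cross (u v : V3) :=
  mkV3 (vy u * vz v - vz u * vy v)
       (vz u * vx v - vx u * vz v)
       (vx u * vy v - vy u * vx v).

(* c = cos alpha = (X,Y) for unit vectors X, Y at angle alpha *)
Definition Zv (X Y : V3) := cross X Y.
Definition Sv (X Y : V3) (c : R) := vsub X (vscale c Y).
Definition Qv (X Y : V3) (c : R) := vsub Y (vscale c X).
Definition Wplus (X Y : V3) (c k : R) :=
  vsub (vscale (1 + k * c) X) (vscale (k + c) Y).
Definition Wminus (X Y : V3) (c k : R) :=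
  vadd (vscale (1 - k * c) X) (vscale (k - c) Y).

Definition inC (X Y : V3) (u : V3) : Prop :=
  exists a b, u = vadd (vscale a X) (vscale b Y) /\ Rabs a + Rabs b = 1.

(* cost(aX + bY) = |a| + k |b| ; the coefficients a, b of u in span(X,Y)
   are recovered from the Gram system (X,Y independent). *)
Definition coefX (X Y u : V3) :=
  (dot u X - dot X Y * dot u Y) / (1 - (dot X Y) ^ 2).
Definition coefY (X Y u : V3) :=
  (dot u Y - dot X Y * dot u X) / (1 - (dot X Y) ^ 2).
Definition cost (X Y : V3) (k : R) (u : V3) :=
  Rabs (coefX X Y u) + k * Rabs (coefY X Y u).

Definition Ham (X Y : V3) (alpha k : R) (p u : V3) :=
  - (sin alpha) ^ 2 * cost X Y k u + dot p u.

(* "M(p) = m" : m is the maximum of H(p, .) over C *)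
Definition Mis (X Y : V3) (alpha k : R) (p : V3) (m : R) : Prop :=
  (exists u, inC X Y u /\ Ham X Y alpha k p u = m) /\
  (forall u, inC X Y u -> Ham X Y alpha k p u <= m).

Fixpoint sumN (f : nat -> R) (n : nat) : R :=
  match n with O => 0 | S m => sumN f m + f m end.

Definition outer_le (E : R -> Prop) (eps : R) : Prop :=
  exists a b : nat -> R,
    (forall n, a n <= b n) /\
    (forall x, E x -> exists n, a n < x < b n) /\
    (forall n, sumN (fun i => b i - a i) n <= eps).

Definition null_set (E : R -> Prop) : Prop :=
  forall eps, 0 < eps -> outer_le E eps.

(* Lebesgue measurability (Stein-Shakarchi definition):
   for all eps > 0 there is an open G containing E with m*(G \ E) <= eps *)
Definition lmeasurable (E : R -> Prop) : Prop :=
  forall eps, 0 < eps ->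
    exists G : R -> Prop, open_set G /\ (forall x, E x -> G x) /\
      outer_le (fun x => G x /\ ~ E x) eps.

Definition measurable_on (t1 t2 : R) (f : R -> R) : Prop :=
  forall r, lmeasurable (fun t => t1 <= t <= t2 /\ f t < r).

Definition measurable_on_V3 (t1 t2 : R) (f : R -> V3) : Prop :=
  measurable_on t1 t2 (fun t => vx (f t)) /\
  measurable_on t1 t2 (fun t => vy (f t)) /\
  measurable_on t1 t2 (fun t => vz (f t)).

Definition abs_cont_on (t1 t2 : R) (f : R -> R) : Prop :=
  forall eps, 0 < eps -> exists delta, 0 < delta /\
    forall (n : nat) (a b : nat -> R),
      (forall i, (i < n)%nat -> t1 <= a i /\ a i <= b i /\ b i <= t2) ->
      (forall i j, (i < j)%nat -> (j < n)%nat -> b i <= a j) ->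
      sumN (fun i => b i - a i) n < delta ->
      sumN (fun i => Rabs (f (b i) - f (a i))) n < eps.

Definition abs_cont_on_V3 (t1 t2 : R) (f : R -> V3) : Prop :=
  abs_cont_on t1 t2 (fun t => vx (f t)) /\
  abs_cont_on t1 t2 (fun t => vy (f t)) /\
  abs_cont_on t1 t2 (fun t => vz (f t)).

Definition ae_on (t1 t2 : R) (P : R -> Prop) : Prop :=
  exists N, null_set N /\ forall t, t1 <= t <= t2 -> ~ N t -> P t.

Definition has_deriv_V3 (p : R -> V3) (t : R) (v : V3) : Prop :=
  derivable_pt_lim (fun s => vx (p s)) t (vx v) /\
  derivable_pt_lim (fun s => vy (p s)) t (vy v) /\
  derivable_pt_lim (fun s => vz (p s)) t (vz v).

From Stdlib Require Import Reals Lra Lia Psatz Classical.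
Open Scope R_scope.

(* In each case p = alpha X + beta Y + z Z; write u = a X + b Y.  The components
   (p, X) and (p, Y) are constant, so their derivatives (p x u, X) = - z b |Z|^2 and
   (p x u, Y) = z a |Z|^2 vanish almost everywhere; as (a, b) <> 0, z = 0 almost
   everywhere, hence everywhere because p is continuous and a null set contains no
   interval (Heine-Borel).  Then (p, Z) is constant too, whose derivative
   (alpha b - beta a) |Z|^2 forces (a, b) to be parallel to (alpha, beta), and
   H(p, u) = 0, i.e. |a| + k |b| = a (p, X) / |Z|^2 + b (p, Y) / |Z|^2, fixes the
   sign, while |a| + |b| = 1 fixes the scale. *)

Lemma sumN_ext f g n : (forall i, (i < n)%nat -> f i = g i) -> sumN f n = sumN g n.
Proof.
  induction n as [|n IH]; intros Hfg; simpl; [reflexivity|].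
  rewrite IH, Hfg; [reflexivity|lia|]. intros i Hi; apply Hfg; lia.
Qed.

Lemma sumN_nonneg f n : (forall i, 0 <= f i) -> 0 <= sumN f n.
Proof. intros Hf; induction n as [|n IH]; simpl; [lra|]. specialize (Hf n); lra. Qed.

Lemma sumN_term_le f n j : (forall i, 0 <= f i) -> (j < n)%nat -> f j <= sumN f n.
Proof.
  intros Hf; induction n as [|n IH]; intros Hj; simpl; [lia|].
  pose proof (sumN_nonneg f n Hf).
  destruct (Nat.eq_dec j n) as [->|Hjn]; [lra|].
  specialize (IH ltac:(lia)); specialize (Hf n); lra.
Qed.

Lemma sumN_replace f g j n : (j < n)%nat ->
  sumN (fun i => if Nat.eqb i j then g else f i) n = sumN f n - f j + g.
Proof.
  induction n as [|n IH]; intros Hj; simpl; [lia|].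
  destruct (Nat.eq_dec j n) as [->|Hjn].
  - rewrite Nat.eqb_refl, (sumN_ext _ f); [lra|].
    intros i Hi; destruct (Nat.eqb_spec i n); [lia|reflexivity].
  - rewrite IH by lia; destruct (Nat.eqb_spec n j); [lia|lra].
Qed.

Lemma sumN_swap_last f j n : (j <= n)%nat ->
  sumN f (S n) = sumN (fun i => if Nat.eqb i j then f n else f i) n + f j.
Proof.
  intros Hj; simpl.
  destruct (Nat.eq_dec j n) as [->|Hjn].
  - rewrite (sumN_ext (fun i => if Nat.eqb i n then f n else f i) f); [lra|].
    intros i Hi; destruct (Nat.eqb_spec i n); [lia|reflexivity].
  - rewrite sumN_replace by lia; lra.
Qed.

Lemma finite_cover_length n (a b : nat -> R) x y :
  (forall i, a i <= b i) -> x <= y ->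
  (forall s, x <= s <= y -> exists i, (i < n)%nat /\ a i < s < b i) ->
  y - x < sumN (fun i => b i - a i) n.
Proof.
  revert a b y; induction n as [|n IH]; intros a b y Hab Hxy Hcov.
  { destruct (Hcov x) as [i [Hi _]]; [lra|lia]. }
  destruct (Hcov y) as [j [Hj [Haj Hbj]]]; [lra|].
  rewrite (sumN_swap_last (fun i => b i - a i) j n) by lia.
  destruct (Rlt_or_le (a j) x) as [Hjx|Hxj].
  { assert (0 <= sumN (fun i => (if Nat.eqb i j then b n - a n else b i - a i)) n); [|lra].
    apply sumN_nonneg; intros i; pose proof (Hab i); pose proof (Hab n); destruct (Nat.eqb i j); lra. }
  (* [x, a j] avoids interval [j], so the remaining [n] intervals cover it. *)
  set (a' := fun i => if Nat.eqb i j then a n else a i).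
  set (b' := fun i => if Nat.eqb i j then b n else b i).
  assert (Hrest : a j - x < sumN (fun i => b' i - a' i) n).
  { apply IH; [intros i; unfold a', b'; destruct (Nat.eqb i j); apply Hab | exact Hxj|].
    intros s Hs; destruct (Hcov s) as [i [Hi Hsi]]; [lra|].
    destruct (Nat.eq_dec i j) as [->|Hij]; [lra|].
    destruct (Nat.eq_dec i n) as [->|Hin].
    - exists j; split; [lia|]. unfold a', b'; rewrite Nat.eqb_refl; exact Hsi.
    - exists i; split; [lia|]. unfold a', b'; destruct (Nat.eqb_spec i j); [lia|exact Hsi]. }
  rewrite (sumN_ext _ (fun i => b' i - a' i)); [lra|].
  intros i _; unfold a', b'; destruct (Nat.eqb i j); reflexivity.
Qed.

Lemma finite_subcover (a b : nat -> R) x y : x <= y ->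
  (forall s, x <= s <= y -> exists n, a n < s < b n) ->
  exists M, forall s, x <= s <= y -> exists i, (i < M)%nat /\ a i < s < b i.
Proof.
  intros Hxy Hcov.
  set (E := fun t => x <= t <= y /\ exists M, forall s, x <= s <= t ->
              exists i, (i < M)%nat /\ a i < s < b i).
  assert (HEx : E x).
  { split; [lra|]. destruct (Hcov x) as [n Hn]; [lra|].
    exists (S n); intros s Hs; exists n; split; [lia|]. replace s with x by lra; exact Hn. }
  assert (HEb : bound E) by (exists y; intros t [Ht _]; lra).
  destruct (completeness E HEb (ex_intro _ x HEx)) as [sg [Hub Hlub]].
  assert (Hxs : x <= sg) by (apply Hub; exact HEx).
  assert (Hsy : sg <= y) by (apply Hlub; intros t [Ht _]; lra).
  destruct (Hcov sg) as [j [Haj Hbj]]; [lra|].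
  assert (Ht : exists t, E t /\ a j < t).
  { apply NNPP; intros Hno.
    assert (sg <= a j); [|lra].
    apply Hlub; intros t Et; apply Rnot_lt_le; intros Hlt; apply Hno; exists t; auto. }
  destruct Ht as [t [[Ht [M HM]] Hat]].
  (* Adding interval [j] extends the cover from [x, t] up to anything below [b j]. *)
  assert (Hext : forall t', t' < b j -> forall s, x <= s <= t' ->
            exists i, (i < Nat.max M (S j))%nat /\ a i < s < b i).
  { intros t' Ht' s Hs; destruct (Rle_or_lt s t) as [Hst|Hst].
    - destruct (HM s) as [i [Hi Hsi]]; [lra|]. exists i; split; [lia|exact Hsi].
    - exists j; split; [lia|lra]. }
  destruct (Rle_or_lt y ((sg + b j) / 2)) as [Hy|Hy].
  - exists (Nat.max M (S j)); intros s Hs; apply (Hext y); lra.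
  - assert (Hmid : E ((sg + b j) / 2)) by (split; [lra|]; exists (Nat.max M (S j)); apply Hext; lra).
    apply Hub in Hmid; lra.
Qed.

Lemma null_set_misses_interval N x y : null_set N -> x < y -> exists t, x < t < y /\ ~ N t.
Proof.
  intros HN Hxy; apply NNPP; intros Hall.
  destruct (HN ((y - x) / 2)) as [a [b [Hab [Hcov Hsum]]]]; [lra|].
  set (x' := x + (y - x) / 4); set (y' := y - (y - x) / 4).
  destruct (finite_subcover a b x' y') as [M HM]; [unfold x', y'; lra| |].
  { intros s Hs; apply Hcov, NNPP; intros HNs; apply Hall.
    exists s; split; [unfold x', y' in Hs; lra|exact HNs]. }
  pose proof (finite_cover_length M a b x' y' Hab ltac:(unfold x', y'; lra) HM).
  specialize (Hsum M); unfold x', y' in *; lra.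
Qed.

Lemma abs_cont_on_continuous t1 t2 f t0 : abs_cont_on t1 t2 f -> t1 <= t0 <= t2 ->
  forall eps, 0 < eps -> exists d, 0 < d /\
    forall s, t1 <= s <= t2 -> Rabs (s - t0) < d -> Rabs (f s - f t0) < eps.
Proof.
  intros Hac Ht0 eps Heps; destruct (Hac eps Heps) as [d [Hd Hsmall]].
  exists d; split; [exact Hd|]; intros s Hs Hst; apply Rabs_def2 in Hst.
  destruct (Rle_or_lt s t0) as [Hle|Hlt].
  - specialize (Hsmall 1%nat (fun _ => s) (fun _ => t0)); simpl in Hsmall.
    rewrite Rabs_minus_sym.
    enough (0 + Rabs (f t0 - f s) < eps) by lra.
    apply Hsmall; [intros; lra | intros; lia | lra].
  - specialize (Hsmall 1%nat (fun _ => t0) (fun _ => s)); simpl in Hsmall.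
    enough (0 + Rabs (f s - f t0) < eps) by lra.
    apply Hsmall; [intros; lra | intros; lia | lra].
Qed.

Lemma abs_cont_on_ae_const t1 t2 f N f0 : abs_cont_on t1 t2 f -> null_set N -> t1 < t2 ->
  (forall s, t1 <= s <= t2 -> ~ N s -> f s = f0) ->
  forall t, t1 <= t <= t2 -> f t = f0.
Proof.
  intros Hac HN Ht Hae t0 Ht0; apply NNPP; intros Hne.
  assert (Hgap : 0 < Rabs (f t0 - f0)) by (apply Rabs_pos_lt; lra).
  destruct (abs_cont_on_continuous t1 t2 f t0 Hac Ht0 _ Hgap) as [d [Hd Hclose]].
  destruct (null_set_misses_interval N (Rmax t1 (t0 - d)) (Rmin t2 (t0 + d)) HN) as [s [Hs HNs]].
  { unfold Rmax, Rmin; repeat destruct (Rle_dec _ _); lra. }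
  assert (Hs' : t1 <= s <= t2 /\ t0 - d < s < t0 + d)
    by (revert Hs; unfold Rmax, Rmin; repeat destruct (Rle_dec _ _); lra).
  specialize (Hclose s ltac:(lra) ltac:(apply Rabs_def1; lra)).
  rewrite (Hae s ltac:(lra) HNs), Rabs_minus_sym in Hclose; lra.
Qed.

Lemma ae_on_exists t1 t2 P : t1 < t2 -> ae_on t1 t2 P -> exists t, t1 <= t <= t2 /\ P t.
Proof.
  intros Ht [N [HN HP]]; destruct (null_set_misses_interval N t1 t2 HN Ht) as [t [Ht' HNt]].
  exists t; split; [lra|]; apply HP; [lra|exact HNt].
Qed.

Lemma ae_on_impl t1 t2 (P Q : R -> Prop) :
  (forall t, t1 <= t <= t2 -> P t -> Q t) -> ae_on t1 t2 P -> ae_on t1 t2 Q.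
Proof. intros HPQ [N [HN HP]]; exists N; split; [exact HN|]; auto. Qed.

(* The derivative is two-sided, so the one-sided quotients inside the interval
   already pin it down, also at the endpoints. *)
Lemma derivable_pt_lim_const_on f t1 t2 C t l : t1 < t2 ->
  (forall s, t1 <= s <= t2 -> f s = C) -> t1 <= t <= t2 ->
  derivable_pt_lim f t l -> l = 0.
Proof.
  intros Ht Hf Ht0 Hl; apply NNPP; intros Hl0.
  destruct (Hl (Rabs l) (Rabs_pos_lt _ Hl0)) as [d Hd].
  pose proof (cond_pos d) as Hd0.
  set (m := Rmin d (t2 - t1) / 2).
  assert (Hm : 0 < m /\ m < d /\ m <= (t2 - t1) / 2)
    by (unfold m, Rmin; destruct (Rle_dec _ _); lra).
  set (h := if Rle_dec t ((t1 + t2) / 2) then m else - m).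
  assert (Hh : h <> 0 /\ Rabs h < d /\ t1 <= t + h <= t2).
  { unfold h; destruct (Rle_dec _ _);
      [rewrite Rabs_right | rewrite Rabs_left]; repeat split; lra. }
  specialize (Hd h (proj1 Hh) (proj1 (proj2 Hh))).
  rewrite (Hf (t + h)), (Hf t) in Hd by lra.
  replace ((C - C) / h - l) with (- l) in Hd by (field; tauto).
  rewrite Rabs_Ropp in Hd; lra.
Qed.

Lemma derivable_pt_lim_dot n p t w : has_deriv_V3 p t w ->
  derivable_pt_lim (fun s => dot n (p s)) t (dot n w).
Proof.
  intros [Hx [Hy Hz]]; unfold dot.
  apply (derivable_pt_lim_plus (fun s => vx n * vx (p s) + vy n * vy (p s))
                                (fun s => vz n * vz (p s)));
    [apply (derivable_pt_lim_plus (fun s => vx n * vx (p s)) (fun s => vy n * vy (p s)))|];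
    apply derivable_pt_lim_scal; assumption.
Qed.

Lemma V3_ext (u v : V3) : vx u = vx v -> vy u = vy v -> vz u = vz v -> u = v.
Proof. destruct u, v; simpl; intros -> -> ->; reflexivity. Qed.

Ltac vsimpl :=
  unfold vadd, vsub, vopp, vscale, dot, cross, Sv, Qv, Zv, Wplus, Wminus in *; simpl in *.

Lemma dot_comm u v : dot u v = dot v u.
Proof. destruct u, v; vsimpl; ring. Qed.

Lemma dot_cross_l X Y : dot X (cross X Y) = 0.
Proof. destruct X, Y; vsimpl; ring. Qed.

Lemma dot_cross_r X Y : dot Y (cross X Y) = 0.
Proof. destruct X, Y; vsimpl; ring. Qed.

Lemma dot_cross_cross X Y : dot (cross X Y) (cross X Y) = dot X X * dot Y Y - dot X Y ^ 2.
Proof. destruct X, Y; vsimpl; ring. Qed.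

Lemma dot_comb n X Y a b : dot n (vadd (vscale a X) (vscale b Y)) = a * dot n X + b * dot n Y.
Proof. destruct n, X, Y; vsimpl; ring. Qed.

Lemma dot_comb_cross n X Y a b z :
  dot n (vadd (vadd (vscale a X) (vscale b Y)) (vscale z (cross X Y)))
  = a * dot n X + b * dot n Y + z * dot n (cross X Y).
Proof. destruct n, X, Y; vsimpl; ring. Qed.

Section TripleProducts.
Variables (X Y : V3) (al be z a b : R).
Let P := vadd (vadd (vscale al X) (vscale be Y)) (vscale z (cross X Y)).
Let U := vadd (vscale a X) (vscale b Y).

Lemma dot_X_cross_comb : dot X (cross P U) = - z * b * dot (cross X Y) (cross X Y).
Proof. unfold P, U; destruct X, Y; vsimpl; ring. Qed.

Lemma dot_Y_cross_comb : dot Y (cross P U) = z * a * dot (cross X Y) (cross X Y).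
Proof. unfold P, U; destruct X, Y; vsimpl; ring. Qed.

Lemma dot_Z_cross_comb :
  dot (cross X Y) (cross P U) = (al * b - be * a) * dot (cross X Y) (cross X Y).
Proof. unfold P, U; destruct X, Y; vsimpl; ring. Qed.
End TripleProducts.

Lemma coefX_comb X Y a b : dot X X = 1 -> dot Y Y = 1 -> dot X Y ^ 2 <> 1 ->
  coefX X Y (vadd (vscale a X) (vscale b Y)) = a.
Proof.
  intros hX hY hXY; unfold coefX.
  rewrite (dot_comm (vadd _ _) X), (dot_comm (vadd _ _) Y), !dot_comb, hX, hY, (dot_comm Y X).
  field; lra.
Qed.

Lemma coefY_comb X Y a b : dot X X = 1 -> dot Y Y = 1 -> dot X Y ^ 2 <> 1 ->
  coefY X Y (vadd (vscale a X) (vscale b Y)) = b.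
Proof.
  intros hX hY hXY; unfold coefY.
  rewrite (dot_comm (vadd _ _) X), (dot_comm (vadd _ _) Y), !dot_comb, hX, hY, (dot_comm Y X).
  field; lra.
Qed.

Lemma cos_acute alpha : 0 < alpha <= PI / 2 -> 0 <= cos alpha < 1.
Proof.
  intros H; pose proof PI_RGT_0.
  assert (0 < sin alpha) by (apply sin_gt_0; lra).
  pose proof (sin2_cos2 alpha); unfold Rsqr in *.
  split; [apply cos_ge_0; lra | nra].
Qed.

Section ZLine.
Variables (X Y : V3) (alpha k t1 t2 al be : R) (u p : R -> V3) (z : R -> R) (N : R -> Prop).
Let c := cos alpha.
Hypotheses (hX : dot X X = 1) (hY : dot Y Y = 1) (hXY : dot X Y = c)
  (hc : 0 <= c < 1) (ht : t1 < t2).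
Hypothesis huC : forall t, t1 <= t <= t2 -> inC X Y (u t).
Hypothesis hp_ac : abs_cont_on_V3 t1 t2 p.
Hypothesis hN : null_set N.
Hypothesis hderiv : forall t, t1 <= t <= t2 -> ~ N t -> has_deriv_V3 p t (cross (p t) (u t)).
Hypothesis hHam : forall t, t1 <= t <= t2 -> ~ N t -> Ham X Y alpha k (p t) (u t) = 0.
Hypothesis hz : forall t, t1 <= t <= t2 ->
  p t = vadd (vadd (vscale al X) (vscale be Y)) (vscale (z t) (cross X Y)).

Lemma dot_cross_XY_self : dot (cross X Y) (cross X Y) = 1 - c ^ 2.
Proof. rewrite dot_cross_cross, hX, hY, hXY; ring. Qed.

Lemma dot_X_line t : t1 <= t <= t2 -> dot X (p t) = al + be * c.
Proof. intros Ht; rewrite hz, dot_comb_cross, hX, hXY by exact Ht; rewrite dot_cross_l; ring. Qed.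

Lemma dot_Y_line t : t1 <= t <= t2 -> dot Y (p t) = al * c + be.
Proof.
  intros Ht; rewrite hz, dot_comb_cross, hY, (dot_comm Y X), hXY by exact Ht.
  rewrite dot_cross_r; ring.
Qed.

Lemma line_z_zero_ae t : t1 <= t <= t2 -> ~ N t -> z t = 0.
Proof.
  intros Ht HNt; destruct (huC t Ht) as [a [b [Hu Hab]]].
  pose proof (derivable_pt_lim_const_on _ _ _ _ _ _ ht dot_X_line Ht
                (derivable_pt_lim_dot X _ _ _ (hderiv t Ht HNt))) as HdX.
  pose proof (derivable_pt_lim_const_on _ _ _ _ _ _ ht dot_Y_line Ht
                (derivable_pt_lim_dot Y _ _ _ (hderiv t Ht HNt))) as HdY.
  rewrite hz, Hu in HdX, HdY by exact Ht.
  rewrite dot_X_cross_comb in HdX; rewrite dot_Y_cross_comb in HdY.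
  rewrite dot_cross_XY_self in HdX, HdY.
  destruct (Req_dec (z t) 0) as [|Hz0]; [assumption|exfalso].
  assert (Hzg : z t * (1 - c ^ 2) <> 0)
    by (apply Rmult_integral_contrapositive_currified; [exact Hz0|nra]).
  assert (a = 0)
    by (apply (Rmult_eq_reg_l (z t * (1 - c ^ 2))); [rewrite Rmult_0_r, <- HdY; ring|exact Hzg]).
  assert (b = 0)
    by (apply (Rmult_eq_reg_l (z t * (1 - c ^ 2))); [lra|exact Hzg]).
  subst a b; rewrite Rabs_R0 in Hab; lra.
Qed.

Lemma line_z_zero t : t1 <= t <= t2 -> z t = 0.
Proof.
  intros Ht.
  set (P0 := vadd (vadd (vscale al X) (vscale be Y)) (vscale 0 (cross X Y))).
  assert (Hae : forall s, t1 <= s <= t2 -> ~ N s -> p s = P0)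
    by (intros s Hs HNs; rewrite hz, line_z_zero_ae; auto).
  destruct hp_ac as [Ax [Ay Az]].
  assert (Hp : p t = P0).
  { apply V3_ext; [eapply (abs_cont_on_ae_const _ _ _ N _ Ax) | eapply (abs_cont_on_ae_const _ _ _ N _ Ay)
                  | eapply (abs_cont_on_ae_const _ _ _ N _ Az)]; eauto;
      intros s Hs HNs; rewrite Hae; auto. }
  rewrite hz in Hp by exact Ht; apply (f_equal (dot (cross X Y))) in Hp.
  unfold P0 in Hp; rewrite !dot_comb_cross, dot_cross_XY_self in Hp.
  apply (Rmult_eq_reg_r (1 - c ^ 2)); [lra|nra].
Qed.

Lemma line_control_coeffs t : t1 <= t <= t2 -> ~ N t ->
  exists a b, u t = vadd (vscale a X) (vscale b Y) /\ Rabs a + Rabs b = 1 /\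
    al * b = be * a /\
    (1 - c ^ 2) * (Rabs a + k * Rabs b) = a * (al + be * c) + b * (al * c + be).
Proof.
  intros Ht HNt; destruct (huC t Ht) as [a [b [Hu Hab]]].
  exists a, b; do 2 (split; [assumption|]); split.
  - assert (HZ : forall s, t1 <= s <= t2 -> dot (cross X Y) (p s) = al * dot (cross X Y) X + be * dot (cross X Y) Y)
      by (intros s Hs; rewrite hz, dot_comb_cross, line_z_zero by exact Hs; ring).
    pose proof (derivable_pt_lim_const_on _ _ _ _ _ _ ht HZ Ht
                  (derivable_pt_lim_dot (cross X Y) _ _ _ (hderiv t Ht HNt))) as HdZ.
    rewrite hz, Hu, dot_Z_cross_comb, dot_cross_XY_self in HdZ by exact Ht.
    apply (Rmult_eq_reg_r (1 - c ^ 2)); [lra|nra].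
  - pose proof (hHam t Ht HNt) as H0; unfold Ham, cost in H0.
    assert (Hc2 : dot X Y ^ 2 <> 1) by (rewrite hXY; nra).
    rewrite Hu, coefX_comb, coefY_comb, dot_comb in H0 by assumption.
    rewrite (dot_comm _ X), (dot_comm _ Y), dot_X_line, dot_Y_line in H0 by exact Ht.
    assert (Hs : sin alpha ^ 2 = 1 - c ^ 2) by (pose proof (sin2 alpha); unfold c, Rsqr in *; lra).
    rewrite Hs in H0; lra.
Qed.
End ZLine.

Lemma Rabs_sub_self_ge0 a : 0 <= Rabs a - a.
Proof. pose proof (Rle_abs a); lra. Qed.

Lemma Rabs_add_self_ge0 a : 0 <= Rabs a + a.
Proof. pose proof (Rle_abs (- a)); rewrite Rabs_Ropp in *; lra. Qed.

Lemma coeffs_along_Wplus c k a b : 0 <= c < 1 -> 0 <= k <= 1 -> Rabs a + Rabs b = 1 ->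
  (1 + k * c) * b = - (k + c) * a ->
  (1 - c ^ 2) * (Rabs a + k * Rabs b)
    = a * (1 + k * c + - (k + c) * c) + b * ((1 + k * c) * c + - (k + c)) ->
  a = (1 + k * c) / (1 + k * c + k + c) /\ b = - (k + c) / (1 + k * c + k + c).
Proof.
  intros hc hk Hab Hrel Hham.
  assert (Hkc : 0 <= k * c) by nra.
  assert (Hsum : (Rabs a - a) + k * (Rabs b + b) = 0).
  { apply (Rmult_eq_reg_l (1 - c ^ 2)); [lra|nra]. }
  pose proof (Rabs_sub_self_ge0 a); pose proof (Rabs_add_self_ge0 b).
  assert (Ha : Rabs a = a) by nra.
  assert (Hb : b <= 0).
  { apply Rnot_lt_le; intros Hb; assert (0 <= a) by (rewrite <- Ha; apply Rabs_pos); nra. }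
  rewrite Ha, (Rabs_left1 b Hb) in Hab.
  assert (HD : 0 < 1 + k * c + k + c) by lra.
  split; apply (Rmult_eq_reg_r (1 + k * c + k + c)); try lra;
    unfold Rdiv; rewrite Rmult_assoc, Rinv_l, Rmult_1_r by lra; nra.
Qed.

Lemma coeffs_along_Wminus c k a b : 0 <= c < 1 -> 0 < k <= 1 -> Rabs a + Rabs b = 1 ->
  (1 - k * c) * b = (k - c) * a ->
  (1 - c ^ 2) * (Rabs a + k * Rabs b)
    = a * (1 - k * c + (k - c) * c) + b * ((1 - k * c) * c + (k - c)) ->
  c <= k /\ exists l, 0 < l /\ a = l * (1 - k * c) /\ b = l * (k - c).
Proof.
  intros hc hk Hab Hrel Hham.
  assert (Hkc : 0 <= k * c < 1) by nra.
  assert (Hsum : (Rabs a - a) + k * (Rabs b - b) = 0).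
  { apply (Rmult_eq_reg_l (1 - c ^ 2)); [lra|nra]. }
  pose proof (Rabs_sub_self_ge0 a); pose proof (Rabs_sub_self_ge0 b).
  assert (Ha : Rabs a = a) by nra.
  assert (Hb : Rabs b = b) by nra.
  assert (0 <= a) by (rewrite <- Ha; apply Rabs_pos).
  assert (0 <= b) by (rewrite <- Hb; apply Rabs_pos).
  assert (Hapos : 0 < a) by (apply Rnot_le_lt; intros Ha0; assert (a = 0) by lra; nra).
  split; [nra|].
  exists (a / (1 - k * c)); split; [apply Rdiv_lt_0_compat; lra|].
  split; [field; intros Habs; lra|].
  apply (Rmult_eq_reg_r (1 - k * c)); [|intros Habs; lra].
  replace (a / (1 - k * c) * (k - c) * (1 - k * c)) with ((k - c) * a)
    by (field; intros Habs; lra); lra.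
Qed.

Section ExtremalOnZLine.
Variables (X Y : V3) (alpha k t1 t2 : R) (u p : R -> V3).
Let c := cos alpha.
Hypotheses (hX : dot X X = 1) (hY : dot Y Y = 1) (hXY : dot X Y = c)
  (hc : 0 <= c < 1) (hk : 0 <= k <= 1) (ht : t1 < t2).
Hypothesis huC : forall t, t1 <= t <= t2 -> inC X Y (u t).
Hypothesis hp_ac : abs_cont_on_V3 t1 t2 p.
Hypothesis hpmp : ae_on t1 t2 (fun t =>
  has_deriv_V3 p t (cross (p t) (u t)) /\
  Ham X Y alpha k (p t) (u t) = 0 /\ Mis X Y alpha k (p t) 0).

Lemma extremal_Z_line al be z :
  (forall t, t1 <= t <= t2 ->
     p t = vadd (vadd (vscale al X) (vscale be Y)) (vscale (z t) (cross X Y))) ->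
  (forall t, t1 <= t <= t2 -> z t = 0) /\
  ae_on t1 t2 (fun t => exists a b,
    u t = vadd (vscale a X) (vscale b Y) /\ Rabs a + Rabs b = 1 /\ al * b = be * a /\
    (1 - c ^ 2) * (Rabs a + k * Rabs b) = a * (al + be * c) + b * (al * c + be)).
Proof.
  intros hz; destruct hpmp as [N [HN HP]].
  assert (Hderiv : forall t, t1 <= t <= t2 -> ~ N t -> has_deriv_V3 p t (cross (p t) (u t)))
    by (intros t Ht HNt; apply (HP t Ht HNt)).
  assert (HHam : forall t, t1 <= t <= t2 -> ~ N t -> Ham X Y alpha k (p t) (u t) = 0)
    by (intros t Ht HNt; apply (HP t Ht HNt)).
  split; [|exists N; split; [exact HN|]].
  - exact (line_z_zero X Y alpha t1 t2 al be u p z N hX hY hXY hc ht huC hp_ac HN Hderiv hz).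
  - exact (line_control_coeffs X Y alpha k t1 t2 al be u p z N hX hY hXY hc ht huC hp_ac HN Hderiv HHam hz).
Qed.

Lemma extremal_S_sub_kQ z :
  (forall t, t1 <= t <= t2 ->
     p t = vadd (vsub (Sv X Y c) (vscale k (Qv X Y c))) (vscale (z t) (Zv X Y))) ->
  (forall t, t1 <= t <= t2 -> z t = 0) /\
  ae_on t1 t2 (fun t => u t = vscale (/ (1 + k * c + k + c)) (Wplus X Y c k)).
Proof.
  intros hz; destruct (extremal_Z_line (1 + k * c) (- (k + c)) z) as [Hz Hae].
  { intros t Ht; rewrite hz by exact Ht; apply V3_ext; vsimpl; ring. }
  split; [exact Hz|]; revert Hae; apply ae_on_impl.
  intros t _ [a [b [Hu [Hab [Hrel Hham]]]]].
  destruct (coeffs_along_Wplus c k a b hc hk Hab Hrel Hham) as [-> ->].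
  rewrite Hu; apply V3_ext; vsimpl; field; intros Habs; nra.
Qed.

Lemma extremal_S_add_kQ : 0 < k -> forall z,
  (forall t, t1 <= t <= t2 ->
     p t = vadd (vadd (Sv X Y c) (vscale k (Qv X Y c))) (vscale (z t) (Zv X Y))) ->
  c <= k /\ (forall t, t1 <= t <= t2 -> z t = 0) /\
  ae_on t1 t2 (fun t => exists l, 0 < l /\ u t = vscale l (Wminus X Y c k) /\ inC X Y (u t)).
Proof.
  intros hk0 z hz; destruct (extremal_Z_line (1 - k * c) (k - c) z) as [Hz Hae].
  { intros t Ht; rewrite hz by exact Ht; apply V3_ext; vsimpl; ring. }
  assert (Hae' : ae_on t1 t2 (fun t => c <= k /\
            exists l, 0 < l /\ u t = vscale l (Wminus X Y c k) /\ inC X Y (u t))).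
  { revert Hae; apply ae_on_impl; intros t Ht [a [b [Hu [Hab [Hrel Hham]]]]].
    destruct (coeffs_along_Wminus c k a b hc (conj hk0 (proj2 hk)) Hab Hrel Hham)
      as [Hck [l [Hl [-> ->]]]].
    split; [exact Hck|]; exists l; split; [exact Hl|]; split; [|apply huC, Ht].
    rewrite Hu; apply V3_ext; vsimpl; ring. }
  destruct (ae_on_exists _ _ _ ht Hae') as [t [_ [Hck _]]].
  split; [exact Hck|]; split; [exact Hz|].
  revert Hae'; apply ae_on_impl; tauto.
Qed.

(* Since [cost (-u) = cost u], the cases [-S ± kQ] are the cases [S ∓ kQ] for the
   coefficients [(-a, -b)] of the control. *)
Lemma extremal_oppS_add_kQ z :
  (forall t, t1 <= t <= t2 ->
     p t = vadd (vadd (vopp (Sv X Y c)) (vscale k (Qv X Y c))) (vscale (z t) (Zv X Y))) ->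
  (forall t, t1 <= t <= t2 -> z t = 0) /\
  ae_on t1 t2 (fun t => exists l, 0 < l /\ u t = vscale l (vopp (Wplus X Y c k)) /\ inC X Y (u t)).
Proof.
  intros hz; destruct (extremal_Z_line (- (1 + k * c)) (k + c) z) as [Hz Hae].
  { intros t Ht; rewrite hz by exact Ht; apply V3_ext; vsimpl; ring. }
  split; [exact Hz|]; revert Hae; apply ae_on_impl.
  intros t Ht [a [b [Hu [Hab [Hrel Hham]]]]].
  rewrite <- (Rabs_Ropp a), <- (Rabs_Ropp b) in Hab, Hham.
  destruct (coeffs_along_Wplus c k (- a) (- b) hc hk Hab ltac:(lra) ltac:(lra)) as [Ha Hb].
  exists (/ (1 + k * c + k + c)); split; [apply Rinv_0_lt_compat; nra|].
  split; [|apply huC, Ht].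
  rewrite Hu, <- (Ropp_involutive a), <- (Ropp_involutive b), Ha, Hb.
  apply V3_ext; vsimpl; field; intros Habs; nra.
Qed.

Lemma extremal_oppS_sub_kQ : 0 < k -> forall z,
  (forall t, t1 <= t <= t2 ->
     p t = vadd (vsub (vopp (Sv X Y c)) (vscale k (Qv X Y c))) (vscale (z t) (Zv X Y))) ->
  c <= k /\ (forall t, t1 <= t <= t2 -> z t = 0) /\
  ae_on t1 t2 (fun t => exists l, 0 < l /\ u t = vscale l (vopp (Wminus X Y c k)) /\ inC X Y (u t)).
Proof.
  intros hk0 z hz; destruct (extremal_Z_line (- (1 - k * c)) (- (k - c)) z) as [Hz Hae].
  { intros t Ht; rewrite hz by exact Ht; apply V3_ext; vsimpl; ring. }
  assert (Hae' : ae_on t1 t2 (fun t => c <= k /\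
            exists l, 0 < l /\ u t = vscale l (vopp (Wminus X Y c k)) /\ inC X Y (u t))).
  { revert Hae; apply ae_on_impl; intros t Ht [a [b [Hu [Hab [Hrel Hham]]]]].
    rewrite <- (Rabs_Ropp a), <- (Rabs_Ropp b) in Hab, Hham.
    destruct (coeffs_along_Wminus c k (- a) (- b) hc (conj hk0 (proj2 hk)) Hab ltac:(lra) ltac:(lra))
      as [Hck [l [Hl [Ha Hb]]]].
    split; [exact Hck|]; exists l; split; [exact Hl|]; split; [|apply huC, Ht].
    rewrite Hu, <- (Ropp_involutive a), <- (Ropp_involutive b), Ha, Hb.
    apply V3_ext; vsimpl; ring. }
  destruct (ae_on_exists _ _ _ ht Hae') as [t [_ [Hck _]]].
  split; [exact Hck|]; split; [exact Hz|].
  revert Hae'; apply ae_on_impl; tauto.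
Qed.
End ExtremalOnZLine.

Theorem lemma3p6 (X Y : V3) (alpha k : R) (t1 t2 : R)
  (u p : R -> V3)
  (hX : dot X X = 1) (hY : dot Y Y = 1)
  (halpha : 0 < alpha <= PI / 2) (hXY : dot X Y = cos alpha)
  (hk : 0 <= k <= 1)
  (ht : t1 < t2)
  (huC : forall t, t1 <= t <= t2 -> inC X Y (u t))
  (hu_meas : measurable_on_V3 t1 t2 u)
  (hp_ac : abs_cont_on_V3 t1 t2 p)
  (hpmp : ae_on t1 t2 (fun t =>
      has_deriv_V3 p t (cross (p t) (u t)) /\
      Ham X Y alpha k (p t) (u t) = 0 /\
      Mis X Y alpha k (p t) 0)) :
  let c := cos alpha in
  let S := Sv X Y c in
  let Q := Qv X Y c in
  let Z := Zv X Y in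
  let Wp := Wplus X Y c k in
  let Wm := Wminus X Y c k in
  (* (a) *)
  (forall z : R -> R,
     (forall t, t1 <= t <= t2 -> p t = vadd (vsub S (vscale k Q)) (vscale (z t) Z)) ->
     (forall t, t1 <= t <= t2 -> z t = 0) /\
     ae_on t1 t2 (fun t => u t = vscale (/ (1 + k * c + k + c)) Wp)) /\
  (* (b) *)
  (0 < k -> forall z : R -> R,
     (forall t, t1 <= t <= t2 -> p t = vadd (vadd S (vscale k Q)) (vscale (z t) Z)) ->
     c <= k /\
     (forall t, t1 <= t <= t2 -> z t = 0) /\
     ae_on t1 t2 (fun t => exists l, 0 < l /\ u t = vscale l Wm /\ inC X Y (u t))) /\
  (* analogue of (a) for p = -S + kQ + zZ *)
  (forall z : R -> R,
     (forall t, t1 <= t <= t2 -> p t = vadd (vadd (vopp S) (vscale k Q)) (vscale (z t) Z)) ->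
     (forall t, t1 <= t <= t2 -> z t = 0) /\
     ae_on t1 t2 (fun t => exists l, 0 < l /\ u t = vscale l (vopp Wp) /\ inC X Y (u t))) /\
  (* analogue of (b) for p = -S - kQ + zZ *)
  (0 < k -> forall z : R -> R,
     (forall t, t1 <= t <= t2 -> p t = vadd (vsub (vopp S) (vscale k Q)) (vscale (z t) Z)) ->
     c <= k /\
     (forall t, t1 <= t <= t2 -> z t = 0) /\
     ae_on t1 t2 (fun t => exists l, 0 < l /\ u t = vscale l (vopp Wm) /\ inC X Y (u t))).
Proof.
  intros c S Q Z Wp Wm.
  pose proof (cos_acute alpha halpha) as hc.
  split; [|split; [|split]];
    [ apply (extremal_S_sub_kQ X Y alpha k t1 t2 u p)
    | apply (extremal_S_add_kQ X Y alpha k t1 t2 u p)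
    | apply (extremal_oppS_add_kQ X Y alpha k t1 t2 u p)
    | apply (extremal_oppS_sub_kQ X Y alpha k t1 t2 u p) ]; assumption.
Qed.
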